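(* The matched pair Lie algebra $\mathfrak{g}\bowtie\mathfrak{h}$ of the 2-cocycle extensions $\mathfrak{g}=V {_\varphi\rtimes}\, \mathfrak{l}$ and $\mathfrak{h}=W {_\phi\rtimes}\, \mathfrak{k}$ is itself a 2-cocycle extension, with respect to the left action $\cdot\!\!\triangleright$ of $\mathfrak{l}\bowtie\mathfrak{k}$ on $V\oplus W$ and the 2-cocycle $\Theta$ defined below; that is, \begin{equation*} (V {_\varphi\rtimes} \,\mathfrak{l}) \bowtie (W {_\phi\rtimes} \, \mathfrak{k}) \cong (V\oplus W) {_\Theta\rtimes} \, (\mathfrak{l} \bowtie \mathfrak{k}). \end{equation*}
   Context: Conventions. If $\mathfrak{h}$ is a Lie algebra acting from the left on a vector space $\mathfrak{g}$ by $\vartriangleright$ and $\Phi:\mathfrak{h}\times\mathfrak{h}\to\mathfrak{g}$ is a $\mathfrak{g}$-valued 2-cocycle, the 2-cocycle extension $\mathfrak{g}{_\Phi\rtimes}\mathfrak{h}$ is $\mathfrak{g}\oplus\mathfrak{h}$ with bracket $[\xi\oplus\eta,\xi'\oplus\eta']=(\eta\vartriangleright\xi'-\eta'\vartriangleright\xi+\Phi(\eta,\eta'))\oplus[\eta,\eta']$. If $\mathfrak{g},\mathfrak{h}$ are Lie algebras with a left action $\vartriangleright$ of $\mathfrak{h}$ on $\mathfrak{g}$ and a right action $\vartriangleleft$ of $\mathfrak{g}$ on $\mathfrak{h}$ satisfying the matched pair compatibility conditions, the matched pair $\mathfrak{g}\bowtie\mathfrak{h}$ is $\mathfrak{g}\oplus\mathfrak{h}$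 with bracket $[\xi\oplus\eta,\xi'\oplus\eta']=([\xi,\xi']+\eta\vartriangleright\xi'-\eta'\vartriangleright\xi)\oplus([\eta,\eta']+\eta\vartriangleleft\xi'-\eta'\vartriangleleft\xi)$. Setting. Let $\mathfrak{l},\mathfrak{k}$ be Lie algebras and $V,W$ vector spaces. Let $\varphi:\mathfrak{l}\times\mathfrak{l}\to V$ and $\phi:\mathfrak{k}\times\mathfrak{k}\to W$ be 2-cocycles with respect to left actions $\downharpoonleft:\mathfrak{l}\otimes V\to V$ and $\downharpoonright:\mathfrak{k}\otimes W\to W$, giving the 2-cocycle extensions $\mathfrak{g}=V{_\varphi\rtimes}\mathfrak{l}$ with bracket $[v\oplus l,v'\oplus l']=(l\downharpoonleft v'-l'\downharpoonleft v+\varphi(l,l'))\oplus[l,l']$ and $\mathfrak{h}=W{_\phi\rtimes}\mathfrak{k}$ with bracket $[w\oplus k,w'\oplus k']=(k\downharpoonright w'-k'\downharpoonright w+\phi(k,k'))\oplus[k,k']$. Let $\blacktriangleright:\mathfrak{k}\otimes\mathfrak{l}\to\mathfrak{l}$ and $\blacktriangleleft:\mathfrak{k}\otimes\mathfrak{l}\to\mathfrak{k}$ be mutual actions making $\mathfrak{l}\bowtie\mathfrak{k}$ a matched pair Lie algebra. Let $\curvearrowright:\mathfrak{k}\otimes V\to V$ be a left action and $\curvearrowleft:W\otimes\mathfrak{l}\to W$ a right action, and let $\epsilon:\mathfrak{k}\otimes\mathfrak{l}\to V$, $\iota:\mathfrak{k}\otimes\mathfrak{l}\to W$ be bilinear maps.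 Define mutual actions of $\mathfrak{h}$ and $\mathfrak{g}$ by $(w\oplus k)\vartriangleright(v\oplus l)=(k\curvearrowright v+\epsilon(k,l))\oplus(k\blacktriangleright l)$ and $(w\oplus k)\vartriangleleft(v\oplus l)=(w\curvearrowleft l+\iota(k,l))\oplus(k\blacktriangleleft l)$, and assume they satisfy the matched pair compatibility conditions, so that $\mathfrak{g}\bowtie\mathfrak{h}$ is a matched pair Lie algebra. Define $\cdot\!\!\triangleright:(\mathfrak{l}\bowtie\mathfrak{k})\times(V\oplus W)\to V\oplus W$ by $(l\oplus k)\cdot\!\!\triangleright(v\oplus w)=(l\downharpoonleft v+k\curvearrowright v)\oplus(-w\curvearrowleft l+k\downharpoonright w)$, assumed to be a left action, and $\Theta:(\mathfrak{l}\bowtie\mathfrak{k})\times(\mathfrak{l}\bowtie\mathfrak{k})\to V\oplus W$ by $\Theta((l\oplus k),(l'\oplus k'))=(\varphi(l,l')+\epsilon(k,l')-\epsilon(k',l))\oplus(\phi(k,k')+\iota(k,l')-\iota(k',l))$, assumed to satisfy the 2-cocycle condition with respect to $\cdot\!\!\triangleright$. *)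

(* Lie algebras over a field K, encoded as K-vector spaces
   (lmodType K) equipped with a bracket satisfying the Lie axioms. *)
From HB Require Import structures.
From mathcomp Require Import all_boot all_order all_algebra.
Set Implicit Arguments. Unset Strict Implicit. Unset Printing Implicit Defensive.
Import GRing.Theory.
Local Open Scope ring_scope.

Section LieDefs.
Variable K : fieldType.

Definition bilinear_map (A B C : lmodType K) (f : A -> B -> C) : Prop :=
  (forall (a : K) x x' y, f (a *: x + x') y = a *: f x y + f x' y) /\
  (forall (a : K) x y y', f x (a *: y + y') = a *: f x y + f x y').

Definition linear_map (A B : lmodType K) (f : A -> B) : Prop :=
  forall (a : K) x y, f (a *: x + y) = a *: f x + f y.

Definition lie_bracket (A : lmodType K) (br : A -> A -> A) : Prop :=
  [/\ bilinear_map br,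
      (forall x, br x x = 0) &
      (forall x y z, br x (br y z) + br y (br z x) + br z (br x y) = 0)].

Definition lie_left_action (A M : lmodType K) (br : A -> A -> A)
  (act : A -> M -> M) : Prop :=
  bilinear_map act /\
  (forall x y m, act (br x y) m = act x (act y m) - act y (act x m)).

Definition lie_right_action (A M : lmodType K) (br : A -> A -> A)
  (act : M -> A -> M) : Prop :=
  bilinear_map act /\
  (forall x y m, act m (br x y) = act (act m x) y - act (act m y) x).

Definition two_cocycle (A M : lmodType K) (br : A -> A -> A)
  (act : A -> M -> M) (Phi : A -> A -> M) : Prop :=
  [/\ bilinear_map Phi,
      (forall x, Phi x x = 0) &
      (forall x y z,
         act x (Phi y z) - act y (Phi x z) + act z (Phi x y)
         - Phi (br x y) z + Phi (br x z) y - Phi (br y z) x = 0)].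

Definition ext_bracket (A M : lmodType K) (br : A -> A -> A)
  (act : A -> M -> M) (Phi : A -> A -> M) (u u' : (M * A)%type) : (M * A)%type :=
  (act u.2 u'.1 - act u'.2 u.1 + Phi u.2 u'.2, br u.2 u'.2).

Definition matched_pair (G H : lmodType K) (brg : G -> G -> G) (brh : H -> H -> H)
  (lact : H -> G -> G) (ract : H -> G -> H) : Prop :=
  [/\ lie_left_action brh lact,
      lie_right_action brg ract,
      (forall (e : H) (x x' : G),
         lact e (brg x x') = brg (lact e x) x' + brg x (lact e x')
                             + lact (ract e x) x' - lact (ract e x') x) &
      (forall (e e' : H) (x : G),
         ract (brh e e') x = brh e (ract e' x) + brh (ract e x) e'
                             + ract e (lact e' x) - ract e' (lact e x))].

Definition bowtie_bracket (G H : lmodType K) (brg : G -> G -> G) (brh : H -> H -> H)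
  (lact : H -> G -> G) (ract : H -> G -> H) (u u' : (G * H)%type) : (G * H)%type :=
  (brg u.1 u'.1 + lact u.2 u'.1 - lact u'.2 u.1,
   brh u.2 u'.2 + ract u.2 u'.1 - ract u'.2 u.1).

Definition lie_iso (A B : lmodType K) (brA : A -> A -> A) (brB : B -> B -> B)
  (f : A -> B) : Prop :=
  [/\ linear_map f, bijective f & forall x y, f (brA x y) = brB (f x) (f y)].

Definition lie_isomorphic (A B : lmodType K) (brA : A -> A -> A) (brB : B -> B -> B)
  : Prop := exists f : A -> B, lie_iso brA brB f.

Section Setting.
Variables (V W L Kk : lmodType K).
Variables (brl : L -> L -> L) (brk : Kk -> Kk -> Kk).
Variables (actl : L -> V -> V)
          (actk : Kk -> W -> W).
Variables (varphi : L -> L -> V) (phi : Kk -> Kk -> W).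
Variables (btr : Kk -> L -> L)
          (btl : Kk -> L -> Kk).
Variables (car : Kk -> V -> V)
          (cal : W -> L -> W).
Variables (eps : Kk -> L -> V) (iota : Kk -> L -> W).

Definition brg := ext_bracket brl actl varphi.
Definition brh := ext_bracket brk actk phi.

Definition gh_lact (u : (W * Kk)%type) (x : (V * L)%type) : (V * L)%type :=
  (car u.2 x.1 + eps u.2 x.2, btr u.2 x.2).
Definition gh_ract (u : (W * Kk)%type) (x : (V * L)%type) : (W * Kk)%type :=
  (cal u.1 x.2 + iota u.2 x.2, btl u.2 x.2).

Definition brlk := bowtie_bracket brl brk btr btl.

Definition dot_act (x : (L * Kk)%type) (m : (V * W)%type) : (V * W)%type :=
  (actl x.1 m.1 + car x.2 m.1, - cal m.2 x.1 + actk x.2 m.2).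

Definition Theta (x y : (L * Kk)%type) : (V * W)%type :=
  (varphi x.1 y.1 + eps x.2 y.1 - eps y.2 x.1,
   phi x.2 y.2 + iota x.2 y.1 - iota y.2 x.1).

End Setting.
End LieDefs.

From HB Require Import structures.
From mathcomp Require Import all_boot all_order all_algebra.
Set Implicit Arguments. Unset Strict Implicit. Unset Printing Implicit Defensive.
Import GRing.Theory.
Local Open Scope ring_scope.

(* The isomorphism is the regrouping (v, l) (+) (w, k) |-> (v, w) (+) (l, k).
   On the l and k components both brackets are literally the bracket of
   l |><| k; on the V and W components they are the same signed sums, up to
   reordering (the sign in - w <~ l is exactly what matches the right action
   of g on h). So the identity holds for arbitrary data: the Lie, action and
   cocycle axioms only make both sides Lie algebras. *)

Definition mid_swap {A B C D : Type} (u : ((A * B) * (C * D))%type) :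
    ((A * C) * (B * D))%type :=
  ((u.1.1, u.2.1), (u.1.2, u.2.2)).

Lemma mid_swapK (A B C D : Type) : cancel (@mid_swap A B C D) (@mid_swap A C B D).
Proof. by case=> [[? ?] [? ?]]. Qed.

Lemma bijective_mid_swap (A B C D : Type) : bijective (@mid_swap A B C D).
Proof. exists (@mid_swap A C B D); exact: mid_swapK. Qed.

Lemma linear_mid_swap (K : fieldType) (A B C D : lmodType K) :
  linear_map (@mid_swap A B C D).
Proof. by move=> a [[? ?] [? ?]] [[? ?] [? ?]]. Qed.

Lemma pairB (A B : zmodType) (a c : A) (b d : B) : (a, b) - (c, d) = (a - c, b - d).
Proof. by []. Qed.

Lemma addrBDB (M : zmodType) (a b c d e f g : M) :
  a - b + c + (d + e) - (f + g) = a + d - (b + f) + (c + e - g).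
Proof. by rewrite !opprD !addrA [LHS](ACl (1*4*2*6*3*5*7)%AC). Qed.

Lemma addNrBNr (M : zmodType) (a b c d : M) : - a + b - (- c + d) = b + c - (d + a).
Proof. by rewrite !opprD opprK !addrA [LHS](ACl (2*3*4*1)%AC). Qed.

Section Regrouping.
Variables (K : fieldType) (V W L Kk : lmodType K).
Variables (brl : L -> L -> L) (brk : Kk -> Kk -> Kk).
Variables (actl : L -> V -> V) (actk : Kk -> W -> W).
Variables (varphi : L -> L -> V) (phi : Kk -> Kk -> W).
Variables (btr : Kk -> L -> L) (btl : Kk -> L -> Kk).
Variables (car : Kk -> V -> V) (cal : W -> L -> W).
Variables (eps : Kk -> L -> V) (iota : Kk -> L -> W).

Lemma mid_swap_bracket (u u' : ((V * L) * (W * Kk))%type) :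
  mid_swap (bowtie_bracket (brg brl actl varphi) (brh brk actk phi)
              (gh_lact btr car eps) (gh_ract btl cal iota) u u')
  = ext_bracket (brlk brl brk btr btl) (dot_act actl actk car cal)
      (Theta varphi phi eps iota) (mid_swap u) (mid_swap u').
Proof.
case: u u' => [[v l] [w k]] [[v' l'] [w' k']].
rewrite /mid_swap /bowtie_bracket /ext_bracket /brg /brh /gh_lact /gh_ract.
rewrite /dot_act /Theta /brlk /bowtie_bracket /=.
congr (_, _, (_, _)); by rewrite pairB /= ?addNrBNr addrBDB.
Qed.

Lemma lie_iso_mid_swap :
  lie_iso
    (bowtie_bracket (brg brl actl varphi) (brh brk actk phi)
       (gh_lact btr car eps) (gh_ract btl cal iota))
    (ext_bracket (brlk brl brk btr btl) (dot_act actl actk car cal)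
       (Theta varphi phi eps iota))
    mid_swap.
Proof.
split; [exact: linear_mid_swap | exact: bijective_mid_swap | exact: mid_swap_bracket].
Qed.

End Regrouping.

Theorem proposition6p1 (K : fieldType) (V W L Kk : lmodType K)
  (brl : L -> L -> L) (brk : Kk -> Kk -> Kk)
  (actl : L -> V -> V) (actk : Kk -> W -> W)
  (varphi : L -> L -> V) (phi : Kk -> Kk -> W)
  (btr : Kk -> L -> L) (btl : Kk -> L -> Kk)
  (car : Kk -> V -> V) (cal : W -> L -> W)
  (eps : Kk -> L -> V) (iota : Kk -> L -> W) :
  lie_bracket brl -> lie_bracket brk ->
  lie_left_action brl actl -> lie_left_action brk actk ->
  two_cocycle brl actl varphi -> two_cocycle brk actk phi ->
  matched_pair brl brk btr btl ->
  lie_left_action brk car -> lie_right_action brl cal ->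
  bilinear_map eps -> bilinear_map iota ->
  matched_pair (brg brl actl varphi) (brh brk actk phi)
    (gh_lact btr car eps) (gh_ract btl cal iota) ->
  lie_left_action (brlk brl brk btr btl) (dot_act actl actk car cal) ->
  two_cocycle (brlk brl brk btr btl) (dot_act actl actk car cal)
    (Theta varphi phi eps iota) ->
  lie_isomorphic
    (bowtie_bracket (brg brl actl varphi) (brh brk actk phi)
       (gh_lact btr car eps) (gh_ract btl cal iota))
    (ext_bracket (brlk brl brk btr btl) (dot_act actl actk car cal)
       (Theta varphi phi eps iota)).
Proof. by move=> *; exists mid_swap; exact: lie_iso_mid_swap. Qed.
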